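(* Let $(E,B,p,\Gamma)$ be a compact graph bundle and $M\subseteq E$ a nowhere dense closed set. Then the set $\{b\in B: M_b \text{ is totally disconnected}\}$ is residual in $B$.
   Context: Compact graph bundle $(E,B,p,\Gamma)$: $E,B$ compact metric spaces, $\Gamma$ a graph (nonempty compact metric space that is a finite union of arcs pairwise disjoint or meeting only at end-points), $p:E\to B$ a continuous surjection such that every $b\in B$ has an open neighbourhood $U$ and a homeomorphism $h:p^{-1}(U)\to U\times\Gamma$ with $\mathrm{pr}_1\circ h=p$. $M_b=M\cap p^{-1}(b)$. Residual: complement of a countable union of nowhere dense sets. *)

From HB Require Import structures.
From mathcomp Require Import all_boot all_order all_algebra.
From mathcomp Require Import all_classical all_reals all_analysis.
Set Implicit Arguments. Unset Strict Implicit. Unset Printing Implicit Defensive.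
Import Order.TTheory GRing.Theory Num.Theory.
Local Open Scope classical_set_scope.
Local Open Scope ring_scope.

(* A compact metric space: a Hausdorff pseudometric space (= metric space)
   whose whole carrier is compact. *)
Definition compact_metric_space {R : realType} (X : pseudoMetricType R) : Prop :=
  hausdorff_space X /\ compact [set: X].

(* f parametrizes an arc: f restricted to [0,1] is continuous and injective
   (hence, [0,1] being compact and X Hausdorff, a homeomorphism onto its image). *)
Definition arc_param {R : realType} {X : topologicalType} (f : R -> X) : Prop :=
  {within `[0, 1]%classic, continuous f} /\ {in `[0, 1]%classic &, injective f}.

Definition arc_of {R : realType} {X : topologicalType} (f : R -> X) : set X :=
  f @` `[(0:R), 1]%classic.

Definition arc_ends {R : realType} {X : topologicalType} (f : R -> X) : set X :=
  [set f 0; f 1].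

Definition is_graph {R : realType} (G : pseudoMetricType R) : Prop :=
  compact_metric_space G /\ [set: G] !=set0 /\
  exists (n : nat) (f : 'I_n -> R -> G),
    (forall i, arc_param (f i)) /\
    [set: G] = \bigcup_(i in [set: 'I_n]) arc_of (f i) /\
    (forall i j, i != j ->
       arc_of (f i) `&` arc_of (f j) `<=` arc_ends (f i) `&` arc_ends (f j)).

Definition local_trivialization {R : realType} {E B G : pseudoMetricType R}
    (p : E -> B) (U : set B) (h : E -> B * G) : Prop :=
  exists g : B * G -> E,
    {within p @^-1` U, continuous h} /\
    {within U `*` [set: G], continuous g} /\
    (forall x, (p @^-1` U) x -> (U `*` [set: G]) (h x)) /\
    (forall y, (U `*` [set: G]) y -> (p @^-1` U) (g y)) /\
    (forall x, (p @^-1` U) x -> g (h x) = x) /\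
    (forall y, (U `*` [set: G]) y -> h (g y) = y) /\
    (forall x, (p @^-1` U) x -> (h x).1 = p x).

Definition compact_graph_bundle {R : realType} (E B G : pseudoMetricType R)
    (p : E -> B) : Prop :=
  compact_metric_space E /\ compact_metric_space B /\ is_graph G /\
      continuous p /\ (forall b : B, exists x : E, p x = b) /\
      (forall b : B, exists (U : set B) (h : E -> B * G),
          [/\ open U, U b & local_trivialization p U h]).

Definition nowhere_dense {T : topologicalType} (A : set T) : Prop :=
  interior (closure A) = set0.

Definition residual {T : topologicalType} (S : set T) : Prop :=
  exists F : nat -> set T, (forall n, nowhere_dense (F n)) /\
    ~` (\bigcup_n F n) `<=` S.

Definition fiber {E B : Type} (p : E -> B) (M : set E) (b : B) : set E :=
  M `&` p @^-1` [set b].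

Arguments compact_graph_bundle {R} E B G p.

From mathcomp Require Import finmap.
From mathcomp Require Import all_boot all_order all_algebra.
From mathcomp Require Import all_classical all_reals all_analysis.
From mathcomp Require Import lra.
Set Implicit Arguments. Unset Strict Implicit. Unset Printing Implicit Defensive.
Import Order.TTheory GRing.Theory Num.Theory.
Local Open Scope classical_set_scope.
Local Open Scope ring_scope.

(* Over a chart [h : p^-1(U) -> U x G], the base points [b] such that [h (M)]
   contains the slab [{b} x A] of an open [A <> set0] form a nowhere dense set,
   for otherwise the preimage of an open box would lie in the nowhere dense
   closed set [M]. A nontrivial connected component of a fibre [M_b] is
   carried by the chart onto a connected subset of [G] with two points, which
   contains an open sub-arc with rational parameters of one of the finitely
   many arcs of [G]. Finitely many charts cover the compact base, so the [b]
   with [M_b] not totally disconnected lie in countably many such nowhere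
   dense sets. *)

Lemma open_setX (T U : topologicalType) (A : set T) (B : set U) :
  open A -> open B -> open (A `*` B).
Proof.
move=> oA oB; rewrite openE => -[x y] [/= Ax By].
by exists (A, B) => //=; split; apply: open_nbhs_nbhs.
Qed.

Lemma continuous_snd (T U : topologicalType) : continuous (@snd T U).
Proof. by move=> [x y]; apply: cvg_snd. Qed.

Lemma continuous_pairl (T U : topologicalType) (y : U) :
  continuous (fun x : T => (x, y)).
Proof. by move=> x; apply: cvg_pair => //; apply: cvg_cst. Qed.

Lemma nowhere_dense0 (T : topologicalType) : nowhere_dense (@set0 T).
Proof. by rewrite /nowhere_dense closure0 interior0. Qed.

Lemma residual_countable (T : topologicalType) (I : countType) (F : I -> set T)
    (S : set T) :
  (forall i, nowhere_dense (F i)) -> ~` (\bigcup_(i in [set: I]) F i) `<=` S ->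
  residual S.
Proof.
move=> ndF FS; exists (fun m => if unpickle m is Some i then F i else set0).
split=> [m|t ntF]; first by case: unpickle => [i|]; [exact: ndF|exact: nowhere_dense0].
by apply: FS => -[i _ Fit]; apply: ntF; exists (pickle i) => //=; rewrite pickleK.
Qed.

(* The library's [compact_cover] is stated for pointed spaces only. *)
Lemma compact_finite_cover (T : topologicalType) (V : T -> set T) :
  compact [set: T] -> (forall x, open (V x) /\ V x x) ->
  exists D : {fset T}, forall x, exists2 c, c \in D & V c x.
Proof.
move=> cT oV; apply: contrapT => nocover.
pose avoid (D : {fset T}) := [set x | forall c, c \in D -> ~ V c x].
have F_filter : Filter (filter_from [set: {fset T}] avoid).
  apply: filter_from_filter; first by exists fset0.
  move=> D1 D2 _ _; exists (D1 `|` D2)%fset => // x hx.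
  by split => c hc; apply: hx; rewrite inE hc ?orbT.
have F_proper : ProperFilter (filter_from [set: {fset T}] avoid).
  apply: filter_from_proper => // D _; apply: contrapT => empty; apply: nocover.
  exists D => x; apply: contrapT => nx; apply: empty; exists x => c cD Vcx.
  by apply: nx; exists c.
have [z [_ clz]] := cT _ F_proper filterT.
have avoid_z : filter_from [set: {fset T}] avoid (avoid [fset z]%fset).
  by exists [fset z]%fset.
have [w [avw Vzw]] := clz _ _ avoid_z (open_nbhs_nbhs (oV z)).
by apply: (avw z) => //; rewrite inE.
Qed.

Section Arc.
Variables (R : realType) (G : topologicalType) (g : R -> G).
Hypothesis arc_g : arc_param g.

Lemma arc_inj s u : 0 <= s <= 1 -> 0 <= u <= 1 -> g s = g u -> s = u.
Proof. by move=> hs hu; apply: arc_g.2; apply/mem_set; rewrite /= in_itv. Qed.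

Lemma closed_arc_segment a b : hausdorff_space G -> 0 <= a -> b <= 1 ->
  closed (g @` `[a, b]).
Proof.
move=> hG a0 b1; apply: compact_closed => //.
apply: continuous_compact; last exact: segment_compact.
apply: continuous_subspaceW arc_g.1 => x /=; rewrite !in_itv /= => /andP[ax xb].
by rewrite (le_trans a0 ax) (le_trans xb b1).
Qed.

Lemma arc_avoids_near t w : 0 < t < 1 -> g t <> w ->
  exists e : R, [/\ 0 < e, 0 < t - e, t + e < 1 &
    forall u, t - e <= u <= t + e -> g u <> w].
Proof.
move=> /andP[t0 t1] gtw.
have [[s [/andP[s0 s1] gsw]]|nos] := pselect (exists s, 0 <= s <= 1 /\ g s = w).
  have st : s != t by apply/eqP => e; apply: gtw; rewrite -e.
  pose m := Num.min (Num.min t (1 - t)) `|s - t|.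
  have := lexx m; rewrite {2}/m !le_min => /andP[/andP[mt m1t] ms].
  have m0 : 0 < m by rewrite /m !lt_min t0 subr_gt0 t1 normr_gt0 subr_eq0 st.
  exists (m / 2); split; [lra|lra|lra|] => u /andP[ue eu] guw.
  have us : u = s by apply: arc_inj; [apply/andP; split; lra|rewrite s0|rewrite guw].
  have : `|s - t| <= m / 2 by rewrite ler_norml -us; apply/andP; split; lra.
  lra.
pose m := Num.min t (1 - t).
have := lexx m; rewrite {2}/m !le_min => /andP[mt m1t].
have m0 : 0 < m by rewrite /m !lt_min t0 subr_gt0 t1.
exists (m / 2); split; [lra|lra|lra|] => u /andP[ue eu] guw.
by apply: nos; exists u; split => //; apply/andP; split; lra.
Qed.

End Arc.

Section Graph.
Variables (R : realType) (G : topologicalType) (n : nat) (f : 'I_n -> R -> G).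
Hypotheses (hG : hausdorff_space G) (arcs : forall i, arc_param (f i))
  (cover : [set: G] = \bigcup_(i in [set: 'I_n]) arc_of (f i))
  (meet_at_ends : forall i j, i != j ->
     arc_of (f i) `&` arc_of (f j) `<=` arc_ends (f i) `&` arc_ends (f j)).

Lemma point_on_arc x : exists i s, 0 <= s <= 1 /\ f i s = x.
Proof.
have : [set: G] x by [].
by rewrite cover => -[i _ [s]]; rewrite /= in_itv /= => s01 fis; exists i, s.
Qed.

(* The complement of an open sub-arc is the union of the other arcs and of two
   closed pieces of the same arc: a point of the sub-arc cannot lie on another
   arc since arcs meet only at end-points. *)
Lemma open_arc_interval i t1 t2 : 0 <= t1 -> t1 < t2 -> t2 <= 1 ->
  open (f i @` `]t1, t2[).
Proof.
move=> t10 t12 t21; rewrite -closedC.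
have -> : ~` (f i @` `]t1, t2[) =
    \bigcup_(j in [set j | j != i]) arc_of (f j) `|`
    (f i @` `[0, t1] `|` f i @` `[t2, 1]).
  apply/seteqP; split => x.
    move=> nx; have [j [s [/andP[s0 s1] fjs]]] := point_on_arc x.
    have [eji|ji] := eqVneq j i; last first.
      by left; exists j => //; exists s; rewrite //= in_itv /= s0.
    subst j; right; have [st1|t1s] := leP s t1.
      by left; exists s; rewrite //= in_itv /= s0.
    have [t2s|st2] := leP t2 s; first by right; exists s; rewrite //= in_itv /= t2s.
    by exfalso; apply: nx; exists s; rewrite //= in_itv /= t1s.
  move=> hx [s]; rewrite /= in_itv /= => /andP[t1s st2] fis.
  have hs : 0 <= s <= 1 by apply/andP; split; lra.
  have onlys u : 0 <= u <= 1 -> f i u = x -> u = s.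
    by move=> hu fiu; apply: (arc_inj (arcs i)) => //; rewrite fiu.
  case: hx => [[j ji [u u01 fju]]|[[u]|[u]]].
  - have : (arc_of (f j) `&` arc_of (f i)) x.
      by split; [exists u|exists s; rewrite //= in_itv].
    move=> /(meet_at_ends ji) [_] [] /esym; [move/(onlys 0)|move/(onlys 1)];
      by rewrite lexx ler01 => /(_ isT); lra.
  - by rewrite /= in_itv /= => /andP[u0 ut1] /onlys; lra.
  - by rewrite /= in_itv /= => /andP[t2u u1] /onlys; lra.
apply: closedU.
  apply: closed_bigcup; first exact: finite_finset.
  by move=> j _; apply: closed_arc_segment.
by apply: closedU; apply: closed_arc_segment => //; lra.
Qed.

(* Otherwise [D] would lie in the finite set of end-points, where [[set x]]
   is clopen. *)
Lemma connected_meets_arc_interior (D : set G) x y : connected D ->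
  D x -> D y -> x <> y -> exists i t, 0 < t < 1 /\ D (f i t).
Proof.
move=> cD Dx Dy xy; apply: contrapT => noint.
pose V := \bigcup_(j in [set: 'I_n]) [set f j 0; f j 1] `\` [set x].
have cV : closed V.
  apply: (accessible_finite_set_closed.1 (hausdorff_accessible hG)).
  apply: finite_setD; apply: bigcup_finite => [|j _]; first exact: finite_finset.
  exact: finite_set2.
suff Dxx : [set x] = D by apply: xy; move: Dy; rewrite -Dxx.
apply: cD; first by exists x.
  exists (~` V); first exact: closed_openC.
  apply/seteqP; split => [z -> | z [Dz nVz]]; first by split => // -[[j _ _] /= []].
  apply: contrapT => zx; apply: nVz; split => //.
  have [j [s [/andP[s0 s1] fjs]]] := point_on_arc z; exists j => //.
  move: s0 s1; rewrite !le_eqVlt => /orP[/eqP s0|s0] /orP[/eqP s1|s1].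
  - by left; rewrite -fjs -s0.
  - by left; rewrite -fjs -s0.
  - by right; rewrite -fjs s1.
  by exfalso; apply: noint; exists j, s; rewrite s0 s1 fjs.
exists [set x]; first exact: accessible_closed_set1 (hausdorff_accessible hG) x.
by apply/seteqP; split => [z ->|z []].
Qed.

Lemma connected_sub_arc_interval (D : set G) i u1 t u2 : connected D ->
  0 <= u1 < t -> t < u2 <= 1 -> D (f i t) -> ~ D (f i u1) -> ~ D (f i u2) ->
  D `<=` f i @` `]u1, u2[.
Proof.
move=> cD /andP[u10 u1t] /andP[tu2 u21] Dt nD1 nD2.
suff <- : D `&` f i @` `]u1, u2[ = D by move=> z [].
apply: cD.
- by exists (f i t); split => //; exists t; rewrite //= in_itv /= u1t tu2.
- by exists (f i @` `]u1, u2[) => //; apply: open_arc_interval; lra.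
exists (f i @` `[u1, u2]); first by apply: closed_arc_segment => //; lra.
apply/seteqP; split => v [Dv [u]]; rewrite /= in_itv /= => /andP[h1 h2] fu.
  by split => //; exists u; rewrite //= in_itv /= !ltW.
split => //; exists u; rewrite //= in_itv /= !lt_neqAle h1 h2 !andbT.
apply/andP; split; apply/eqP => e.
  by apply: nD1; rewrite e fu.
by apply: nD2; rewrite -e fu.
Qed.

Lemma connected_contains_arc_segment (D : set G) x y : connected D ->
  D x -> D y -> x <> y ->
  exists i a c, [/\ 0 < a, a < c, c < 1 & f i @` `[a, c] `<=` D].
Proof.
move=> cD Dx Dy xy.
have [i [t [t01 Dt]]] := connected_meets_arc_interior cD Dx Dy xy.
have [w [Dw tw]] : exists w, D w /\ f i t <> w.
  have [e|] := pselect (f i t = x); last by exists x.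
  by exists y; split => // ey; apply: xy; rewrite -e.
have [e [e0 te0 te1 avoid]] := arc_avoids_near (arcs i) t01 tw.
have /andP[t0 t1] := t01.
apply: contrapT => noseg.
have gap a c : 0 < a -> a < c -> c < 1 -> exists u, a <= u <= c /\ ~ D (f i u).
  move=> a0 ac c1; apply: contrapT => full; apply: noseg; exists i, a, c.
  split=> // v [u]; rewrite /= in_itv /= => au <-.
  by apply: contrapT => nD; apply: full; exists u.
have [u2 [/andP[tu2 u2e] nD2]] := gap t (t + e) (ltac:(lra)) (ltac:(lra)) te1.
have [u1 [/andP[u1e u1t] nD1]] := gap (t - e) t te0 (ltac:(lra)) (ltac:(lra)).
have tu2' : t < u2.
  by rewrite lt_neqAle tu2 andbT; apply/eqP => et; apply: nD2; rewrite -et.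
have u1t' : u1 < t.
  by rewrite lt_neqAle u1t andbT; apply/eqP => et; apply: nD1; rewrite et.
have u1_t : 0 <= u1 < t by apply/andP; split; lra.
have t_u2 : t < u2 <= 1 by apply/andP; split; lra.
have [u] := connected_sub_arc_interval cD u1_t t_u2 Dt nD1 nD2 Dw.
rewrite /= in_itv /= => /andP[h1 h2]; apply: avoid; apply/andP; split; lra.
Qed.

Lemma connected_contains_rational_arc (D : set G) x y : connected D ->
  D x -> D y -> x <> y ->
  exists i (q1 q2 : rat),
    [&& 0 < ratr q1 :> R, ratr q1 < ratr q2 :> R & ratr q2 < 1 :> R] /\
    f i @` `]ratr q1, ratr q2[ `<=` D.
Proof.
move=> cD Dx Dy xy.
have [i [a [c [a0 ac c1 seg]]]] := connected_contains_arc_segment cD Dx Dy xy.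
have [q1] := rat_in_itvoo ac; rewrite in_itv /= => /andP[aq1 q1c].
have [q2] := rat_in_itvoo q1c; rewrite in_itv /= => /andP[q12 q2c].
exists i, q1, q2; split.
  by rewrite q12; apply/andP; split; lra.
move=> v [s]; rewrite /= in_itv /= => /andP[q1s sq2] <-.
by apply: seg; exists s; rewrite //= in_itv /=; apply/andP; split; lra.
Qed.

End Graph.

Section Trivialization.
Variables (R : realType) (E B G : pseudoMetricType R) (p : E -> B).
Variables (U : set B) (h : E -> B * G).
Hypotheses (cont_p : continuous p) (open_U : open U)
  (triv : local_trivialization p U h).

Definition slab_base (M : set E) (A : set G) : set B :=
  [set b | U b /\ [set b] `*` A `<=` h @` (M `&` p @^-1` U)].

(* With [g] the inverse of [h], [slab_base M A] is the set of [b \in U] such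
   that [g (b, s) \in M] for all [s \in A]; it is closed in [U], so an open
   [V] inside its closure would put the nonempty open set [g ((V `&` U) `*` A)]
   inside [M]. *)
Lemma nowhere_dense_slab_base (M : set E) (A : set G) :
  closed M -> nowhere_dense M -> open A -> A !=set0 ->
  nowhere_dense (slab_base M A).
Proof.
move=> cM ndM oA [a Aa].
have [g [hc [gc [hU [gU [gh [hg h1]]]]]]] := triv.
have open_pU : open (p @^-1` U) by apply: open_comp => // x _; apply: cont_p.
have open_UG : open (U `*` [set: G]) := open_setX open_U openT.
set P := slab_base M A.
have slabM b s : P b -> A s -> M (g (b, s)).
  by move=> [_ sub] As; have [x [Mx pUx] <-] := sub (b, s) (conj erefl As); rewrite gh.
have closureP b s : closure P b -> U b -> A s -> M (g (b, s)).
  move=> cPb Ub As; apply: contrapT => nM.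
  pose Q := (fun b' => (b', s)) @^-1` ((U `*` [set: G]) `&` g @^-1` (~` M)).
  have oQ : open Q.
    apply: (continuousP _).1; first exact: continuous_pairl.
    apply: (continuous_inP g open_UG).1; last exact: closed_openC.
    by rewrite -continuous_open_subspace.
  have [b' [Pb' Qb']] := cPb Q (open_nbhs_nbhs (conj oQ (conj (conj Ub I) nM))).
  exact: Qb'.2 (slabM _ _ Pb' As).
apply/seteqP; split=> [b0 Vb0|//].
set V := interior (closure P).
have [b1 [Pb1 Vb1]] : (P `&` V) !=set0.
  by apply: (interior_subset Vb0); apply: nbhs_interior.
pose W := (p @^-1` U) `&` h @^-1` ((V `&` U) `*` A).
have oW : open W.
  apply: (proj1 (continuous_inP h open_pU)); first by rewrite -continuous_open_subspace.
  by apply: open_setX => //; apply: openI => //; apply: open_interior.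
have Ub1 : U b1 := Pb1.1.
have Wg : W (g (b1, a)).
  have UGb1a : (U `*` [set: G]) (b1, a) by [].
  by split; [exact: gU|rewrite /= hg].
have WM : W `<=` M.
  move=> x [pUx [[Vb Ub] As]]; rewrite -(gh x pUx) [h x]surjective_pairing.
  exact: closureP (interior_subset Vb) Ub As.
have : interior (closure M) (g (b1, a)).
  apply: (filterS (@subset_closure _ M)); apply: (filterS WM).
  exact: open_nbhs_nbhs (conj oW Wg).
by rewrite ndM.
Qed.

Lemma fibre_trivialization (M C : set E) (b : B) :
  U b -> C `<=` fiber p M b -> connected C ->
  [/\ connected ((snd \o h) @` C), {in C &, injective (snd \o h)} &
      [set b] `*` ((snd \o h) @` C) `<=` h @` (M `&` p @^-1` U)].
Proof.
move=> Ub CM cC; have [g [hc [_ [_ [_ [gh [_ h1]]]]]]] := triv.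
have CU : C `<=` p @^-1` U by move=> x /CM [_ /= ->].
have hC x : C x -> h x = (b, (h x).2).
  move=> Cx; rewrite [LHS]surjective_pairing h1; last exact: CU.
  by case: (CM _ Cx) => _ ->.
split.
- apply: connected_continuous_connected cC _ => x.
  apply: (@continuous_comp (subspace C) _ _ h snd x); last exact: continuous_snd.
  exact: continuous_subspaceW CU hc x.
- move=> x y /set_mem Cx /set_mem Cy /= e.
  by rewrite -(gh x (CU _ Cx)) -(gh y (CU _ Cy)) hC // [in RHS]hC // e.
- move=> [b' s] [/= -> [x Cx <-]]; exists x; last by rewrite -hC.
  by split; [exact: (CM _ Cx).1|exact: CU].
Qed.

End Trivialization.

Section GraphBundle.
Variables (R : realType) (E B G : pseudoMetricType R) (p : E -> B).
Variables (U : set B) (h : E -> B * G) (n : nat) (f : 'I_n -> R -> G).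
Hypotheses (cont_p : continuous p) (open_U : open U)
  (triv : local_trivialization p U h).
Hypotheses (hG : hausdorff_space G) (arcs : forall i, arc_param (f i))
  (cover : [set: G] = \bigcup_(i in [set: 'I_n]) arc_of (f i))
  (meet_at_ends : forall i j, i != j ->
     arc_of (f i) `&` arc_of (f j) `<=` arc_ends (f i) `&` arc_ends (f j)).

Definition arc_slab_base (M : set E) i (q1 q2 : rat) : set B :=
  if [&& 0 < ratr q1 :> R, ratr q1 < ratr q2 :> R & ratr q2 < 1 :> R]
  then slab_base p U h M (f i @` `]ratr q1, ratr q2[)
  else set0.

Lemma nowhere_dense_arc_slab_base (M : set E) i q1 q2 :
  closed M -> nowhere_dense M -> nowhere_dense (arc_slab_base M i q1 q2).
Proof.
move=> cM ndM; rewrite /arc_slab_base.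
case: ifP => [/and3P[q10 q12 q21]|_]; last exact: nowhere_dense0.
apply: nowhere_dense_slab_base => //; first by apply: open_arc_interval; rewrite // ltW.
pose s := (ratr q1 + ratr q2) / 2 : R.
by exists (f i s); exists s => //; rewrite /= in_itv /= /s; apply/andP; split; lra.
Qed.

Lemma connected_fibre_arc_slab_base (M C : set E) b x y :
  U b -> C `<=` fiber p M b -> connected C -> C x -> C y -> x <> y ->
  exists i q1 q2, arc_slab_base M i q1 q2 b.
Proof.
move=> Ub CM cC Cx Cy xy.
have [cC' injC slab] := fibre_trivialization triv Ub CM cC.
have hxy : (snd \o h) x <> (snd \o h) y.
  by move=> /injC e; apply: xy; rewrite e // inE.
have [i [q1 [q2 [hq arcC]]]] := connected_contains_rational_arc hG arcs cover
  meet_at_ends cC' (imageP _ Cx) (imageP _ Cy) hxy.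
exists i, q1, q2; rewrite /arc_slab_base hq; split=> //.
by move=> [b' s] [/= -> /arcC As]; apply: slab.
Qed.

End GraphBundle.

Theorem lemma17 (R : realType) (E B G : pseudoMetricType R) (p : E -> B)
    (M : set E) :
  compact_graph_bundle E B G p -> closed M -> nowhere_dense M ->
  residual [set b : B | totally_disconnected (fiber p M b)].
Proof.
move=> [_ [[_ cB] [[[hG _] [_ [n [f [arcs [cover ends]]]]]] [cont_p [_ triv]]]]] cM ndM.
pose is_chart b (Uh : set B * (E -> B * G)) :=
  [/\ open Uh.1, Uh.1 b & local_trivialization p Uh.1 Uh.2].
have [chart chartP] : {chart & forall b, is_chart b (chart b)}.
  by apply: choice => b; have [U [h trivUh]] := triv b; exists (U, h).
have [D coverD] : exists D : {fset B}, forall b, exists2 c, c \in D & (chart c).1 b.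
  by apply: compact_finite_cover cB _ => c; case: (chartP c).
pose bad (k : D * 'I_n * rat * rat) : set B :=
  let: (c, i, q1, q2) := k in
  arc_slab_base p (chart (val c)).1 (chart (val c)).2 f M i q1 q2.
apply: (@residual_countable _ _ bad).
  move=> [[[c i] q1] q2] /=; have [oU _ trivc] := chartP (val c).
  exact (nowhere_dense_arc_slab_base cont_p oU trivc hG arcs cover ends i q1 q2 cM ndM).
move=> b good x Sx; set C := connected_component _ x.
apply/seteqP; split=> [y Cy|_ ->]; last exact: connected_component_refl.
apply: contrapT => yx; have [c Dc Ucb] := coverD b; have [_ _ trivc] := chartP c.
have [i [q1 [q2 slab]]] := connected_fibre_arc_slab_base trivc hG arcs cover ends Ucb
  (@connected_component_sub _ _ x) (@component_connected _ _ x)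
  (connected_component_refl Sx) Cy (nesym yx).
by apply: good; exists ([` Dc]%fset, i, q1, q2).
Qed.
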